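(* Let $\mathcal{A}(X)$ be the free transposed Poisson $3$-Lie algebra over $\mathbb{C}$ generated by a countable set $X=\{a_1,a_2,\ldots\}$. Then $\mathcal{A}(X)$ does not satisfy the identity $$S(h,y_1,y_2,x_1,x_2):=y_1[hy_2,x_1,x_2]-y_2[hy_1,x_1,x_2]+hx_1[y_1,y_2,x_2]-hx_2[y_1,y_2,x_1]=0;$$ that is, there exist $h,y_1,y_2,x_1,x_2\in\mathcal{A}(X)$ with $S(h,y_1,y_2,x_1,x_2)\neq 0$. In particular, $\mathcal{A}(X)$ is not a strong transposed Poisson $3$-Lie algebra.
   Context: A $3$-Lie algebra is a vector space with a trilinear skew-symmetric bracket satisfying $[[x_1,x_2,x_3],y_2,y_3]=\sum_{i=1}^3[x_1,\ldots,[x_i,y_2,y_3],\ldots,x_3]$. A transposed Poisson $3$-Lie algebra is a triple $(A,\cdot,[\cdot,\cdot,\cdot])$ with $(A,\cdot)$ commutative associative, $(A,[\cdot,\cdot,\cdot])$ a $3$-Lie algebra, and $3h[a_1,a_2,a_3]=[ha_1,a_2,a_3]+[a_1,ha_2,a_3]+[a_1,a_2,ha_3]$ for all $h,a_i\in A$. These algebras form a variety defined by multilinear identities; $\mathcal{A}(X)$ is the free object in this variety on $X$. A transposed Poisson $3$-Lie algebra is strong if it satisfies $S(h,y_1,y_2,x_1,x_2)=0$ identically. *)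

From HB Require Import structures.
From mathcomp Require Import all_boot all_order all_algebra.
From mathcomp Require Import complex.
From mathcomp Require Import Rstruct.
Set Implicit Arguments. Unset Strict Implicit. Unset Printing Implicit Defensive.
Import Order.TTheory GRing.Theory Num.Theory.
Local Open Scope ring_scope.

Definition Cplx : fieldType := (Rdefinitions.R)[i].

Record TP3L (F : fieldType) := {
  tp_carrier :> lmodType F;
  tp_mul : tp_carrier -> tp_carrier -> tp_carrier;
  tp_br : tp_carrier -> tp_carrier -> tp_carrier -> tp_carrier;
  tp_mul_linear : forall (a : F) (x y z : tp_carrier),
      tp_mul (a *: x + y) z = a *: tp_mul x z + tp_mul y z;
  tp_mul_comm : forall x y, tp_mul x y = tp_mul y x;
  tp_mul_assoc : forall x y z, tp_mul x (tp_mul y z) = tp_mul (tp_mul x y) z;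
  tp_br_linear : forall (a : F) (x x' y z : tp_carrier),
      tp_br (a *: x + x') y z = a *: tp_br x y z + tp_br x' y z;
  tp_br_skew12 : forall x y z, tp_br x y z = - tp_br y x z;
  tp_br_skew23 : forall x y z, tp_br x y z = - tp_br x z y;
  tp_filippov : forall x1 x2 x3 y2 y3,
      tp_br (tp_br x1 x2 x3) y2 y3 =
        tp_br (tp_br x1 y2 y3) x2 x3 + tp_br x1 (tp_br x2 y2 y3) x3
        + tp_br x1 x2 (tp_br x3 y2 y3);
  tp_compat : forall h a1 a2 a3,
      tp_mul h (tp_br a1 a2 a3) *+ 3 =
        tp_br (tp_mul h a1) a2 a3 + tp_br a1 (tp_mul h a2) a3
        + tp_br a1 a2 (tp_mul h a3)
}.

Definition tp_hom (F : fieldType) (A B : TP3L F) (g : A -> B) : Prop :=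
  (forall (a : F) (x y : A), g (a *: x + y) = a *: g x + g y) /\
  (forall x y : A, g (tp_mul x y) = tp_mul (g x) (g y)) /\
  (forall x y z : A, g (tp_br x y z) = tp_br (g x) (g y) (g z)).

Definition tp_free (F : fieldType) (X : Type) (A : TP3L F) (iota : X -> A)
  : Prop :=
  forall (B : TP3L F) (f : X -> B),
    (exists g : A -> B, tp_hom g /\ forall x, g (iota x) = f x) /\
    (forall g1 g2 : A -> B, tp_hom g1 -> tp_hom g2 ->
       (forall x, g1 (iota x) = g2 (iota x)) -> forall u, g1 u = g2 u).

Definition tp_S (F : fieldType) (A : TP3L F) (h y1 y2 x1 x2 : A) : A :=
  tp_mul y1 (tp_br (tp_mul h y2) x1 x2)
  - tp_mul y2 (tp_br (tp_mul h y1) x1 x2)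
  + tp_mul (tp_mul h x1) (tp_br y1 y2 x2)
  - tp_mul (tp_mul h x2) (tp_br y1 y2 x1).

(* A homomorphism of transposed Poisson 3-Lie algebras maps S(h,y1,y2,x1,x2)
   to S evaluated at the images, so an identity S = 0 of the free algebra
   holds in every algebra generated by its images.  It therefore suffices to
   find one algebra with two elements a, b such that S(a,a,b,a,b) <> 0.
   Take the 7-dimensional algebra with basis a, b, a^2, ab, u, v, w (the
   coordinates 0, ..., 6, in this order) whose only
   nonzero products of basis vectors are a.a = a^2, a.b = ab, a.u = b.v = w,
   and whose bracket is the skew-symmetric extension of
   [ab,a,b] = u, [a^2,a,b] = -v, [a^2,ab,b] = -3w.  There
   S(a,a,b,a,b) = a[ab,a,b] - b[a^2,a,b] = a.u + b.v = 2w. *)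
From mathcomp Require Import all_boot all_order all_algebra.
From mathcomp Require Import complex Rstruct ring.
Set Implicit Arguments. Unset Strict Implicit. Unset Printing Implicit Defensive.
Import GRing.Theory Num.Theory.
Local Open Scope ring_scope.

Section Homomorphisms.
Variables (F : fieldType) (A B : TP3L F) (g : A -> B).
Hypothesis g_hom : tp_hom g.

Lemma tp_hom_add : {morph g : x y / x + y}.
Proof.
have [hom_lin _] := g_hom; move=> x y.
by have := hom_lin 1 x y; rewrite !scale1r.
Qed.

Lemma tp_hom0 : g 0 = 0.
Proof. by apply/(addrI (g 0)); rewrite -tp_hom_add !addr0. Qed.

Lemma tp_hom_opp : {morph g : x / - x}.
Proof.
have [hom_lin _] := g_hom; move=> x.
by have := hom_lin (-1) x 0; rewrite !scaleN1r tp_hom0 !addr0.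
Qed.

Lemma tp_hom_S h y1 y2 x1 x2 :
  g (tp_S h y1 y2 x1 x2) = tp_S (g h) (g y1) (g y2) (g x1) (g x2).
Proof.
have [_ [hom_mul hom_br]] := g_hom.
by rewrite /tp_S !(tp_hom_add, tp_hom_opp) !hom_mul !hom_br !hom_mul.
Qed.

End Homomorphisms.

Lemma tp_free_S_eq0 (F : fieldType) (X : Type) (A : TP3L F) (iota : X -> A)
    (B : TP3L F) (f : X -> B) (h y1 y2 x1 x2 : X) :
  tp_free iota -> tp_S (iota h) (iota y1) (iota y2) (iota x1) (iota x2) = 0 ->
  tp_S (f h) (f y1) (f y2) (f x1) (f x2) = 0.
Proof.
move=> free S0; have [[g [g_hom g_iota]] _] := free B f.
by rewrite -!g_iota -tp_hom_S // S0 tp_hom0.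
Qed.

Section Witness.
Variable F : fieldType.
Local Notation V := 'rV[F]_7.

Definition co (x : V) (k : nat) : F := x ord0 (inord k).

Lemma co_inj (x y : V) : (forall k, (k < 7)%N -> co x k = co y k) -> x = y.
Proof.
move=> eq_co; apply/rowP => j.
by have := eq_co _ (ltn_ord j); rewrite /co inord_val.
Qed.

Lemma coD (x y : V) k : co (x + y) k = co x k + co y k.
Proof. by rewrite /co !mxE. Qed.

Lemma coN (x : V) k : co (- x) k = - co x k.
Proof. by rewrite /co !mxE. Qed.

Lemma coZ (a : F) (x : V) k : co (a *: x) k = a * co x k.
Proof. by rewrite /co !mxE. Qed.

Lemma coMn (x : V) n k : co (x *+ n) k = co x k *+ n.
Proof. by rewrite /co mulmxnE. Qed.

Definition minor3 (i j k : nat) (x y z : V) : F :=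
  co x i * (co y j * co z k - co y k * co z j)
  - co y i * (co x j * co z k - co x k * co z j)
  + co z i * (co x j * co y k - co x k * co y j).

Definition witness_mul_co (x y : V) (k : nat) : F :=
  match k with
  | 2 => co x 0 * co y 0
  | 3 => co x 0 * co y 1 + co x 1 * co y 0
  | 6 => co x 0 * co y 4 + co x 4 * co y 0 + co x 1 * co y 5 + co x 5 * co y 1
  | _ => 0
  end.

Definition witness_br_co (x y z : V) (k : nat) : F :=
  match k with
  | 4 => minor3 3 0 1 x y z
  | 5 => - minor3 2 0 1 x y z
  | 6 => - (3%:R * minor3 2 3 1 x y z)
  | _ => 0
  end.

Definition witness_mul (x y : V) : V := \row_(k < 7) witness_mul_co x y k.
Definition witness_br (x y z : V) : V := \row_(k < 7) witness_br_co x y z k.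

Lemma co_witness_mul x y k :
  (k < 7)%N -> co (witness_mul x y) k = witness_mul_co x y k.
Proof. by move=> lt_k7; rewrite /co mxE inordK. Qed.

Lemma co_witness_br x y z k :
  (k < 7)%N -> co (witness_br x y z) k = witness_br_co x y z k.
Proof. by move=> lt_k7; rewrite /co mxE inordK. Qed.

Definition basis7 (n : nat) : V := \row_(k < 7) (k == n :> nat)%:R.

Lemma co_basis7 n k : (k < 7)%N -> co (basis7 n) k = (k == n)%:R.
Proof. by move=> lt_k7; rewrite /co mxE inordK. Qed.

Lemma basis7_neq0 n : (n < 7)%N -> basis7 n != 0.
Proof.
move=> lt_n7; apply/eqP => /(congr1 (co^~ n)).
by rewrite co_basis7 // eqxx /co mxE => /eqP; rewrite oner_eq0.
Qed.

Ltac coordinatewise :=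
  apply: co_inj; case=> [|[|[|[|[|[|[|?]]]]]]] ? //;
  do 4 rewrite ?(coD, coN, coZ, coMn, co_basis7) //=
    ?(co_witness_mul, co_witness_br) //= /minor3 /=;
  ring.

Lemma witness_mul_linear (a : F) (x y z : V) :
  witness_mul (a *: x + y) z = a *: witness_mul x z + witness_mul y z.
Proof. coordinatewise. Qed.

Lemma witness_mulC (x y : V) : witness_mul x y = witness_mul y x.
Proof. coordinatewise. Qed.

Lemma witness_mulA (x y z : V) :
  witness_mul x (witness_mul y z) = witness_mul (witness_mul x y) z.
Proof. coordinatewise. Qed.

Lemma witness_br_linear (a : F) (x x' y z : V) :
  witness_br (a *: x + x') y z = a *: witness_br x y z + witness_br x' y z.
Proof. coordinatewise. Qed.

Lemma witness_br_skew12 (x y z : V) : witness_br x y z = - witness_br y x z.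
Proof. coordinatewise. Qed.

Lemma witness_br_skew23 (x y z : V) : witness_br x y z = - witness_br x z y.
Proof. coordinatewise. Qed.

Lemma witness_filippov x1 x2 x3 y2 y3 :
  witness_br (witness_br x1 x2 x3) y2 y3 =
    witness_br (witness_br x1 y2 y3) x2 x3 + witness_br x1 (witness_br x2 y2 y3) x3
    + witness_br x1 x2 (witness_br x3 y2 y3).
Proof. coordinatewise. Qed.

Lemma witness_compat h a1 a2 a3 :
  witness_mul h (witness_br a1 a2 a3) *+ 3 =
    witness_br (witness_mul h a1) a2 a3 + witness_br a1 (witness_mul h a2) a3
    + witness_br a1 a2 (witness_mul h a3).
Proof. coordinatewise. Qed.

Definition tp_witness : TP3L F :=
  Build_TP3L witness_mul_linear witness_mulC witness_mulA witness_br_linear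
    witness_br_skew12 witness_br_skew23 witness_filippov witness_compat.

Lemma tp_witness_S :
  tp_S (A := tp_witness) (basis7 0) (basis7 0) (basis7 1) (basis7 0) (basis7 1)
  = 2%:R *: basis7 6.
Proof. rewrite /tp_S /=; coordinatewise. Qed.

Lemma tp_witness_S_neq0 : 2%:R != 0 :> F ->
  tp_S (A := tp_witness) (basis7 0) (basis7 0) (basis7 1) (basis7 0) (basis7 1)
  != 0.
Proof.
by move=> two_neq0; rewrite tp_witness_S scaler_eq0 negb_or two_neq0 basis7_neq0.
Qed.

End Witness.

Theorem mainTheorem8 (A : TP3L Cplx) (iota : nat -> A) :
  tp_free iota ->
  exists h y1 y2 x1 x2 : A, tp_S h y1 y2 x1 x2 <> 0.
Proof.
move=> free; exists (iota 0%N), (iota 0%N), (iota 1%N), (iota 0%N), (iota 1%N).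
move=> /(tp_free_S_eq0 (B := tp_witness Cplx) (@basis7 Cplx) free) /eqP.
by apply/negP/tp_witness_S_neq0; rewrite /Cplx pnatr_eq0.
Qed.
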